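(* Let $\Lambda$ be a row-finite $k$-graph with no sources, and let $\{t_\lambda\}_{\lambda\in\Lambda}$ be a permutative representation of $C^*(\Lambda)$ on $\mathcal H$ with permuted orthonormal basis $\{e_i\}_{i\in I}$, bijections $\tilde\sigma_\lambda:J_\lambda\to K_\lambda$, coding maps $\tilde\sigma^n:I\to I$, and encoding map $E:I\to\Lambda^\infty$. If $E$ is injective, then, setting $\Omega:=E(I)\subseteq\Lambda^\infty$, we have $E^{-1}\circ\sigma_\lambda\circ E(i)=\tilde\sigma_\lambda(i)$ for all $\lambda\in\Lambda$ and $i\in J_\lambda$, and $E^{-1}\circ\sigma^n\circ E(i)=\tilde\sigma^n(i)$ for all $n\in\mathbb N^k$ and $i\in I$; i.e. $I$ is identified with $\Omega$ and the maps $\tilde\sigma_\lambda,\tilde\sigma^n$ with the prefixing and shift maps restricted to $\Omega$.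
   Context: A $k$-graph ($k\ge1$) is a countable small category $\Lambda$ with a functor $d:\Lambda\to\mathbb N^k$ satisfying unique factorization: if $d(\lambda)=m+n$ there are unique $\mu,\nu$ with $\lambda=\mu\nu$, $d(\mu)=m$, $d(\nu)=n$. $\Lambda^0$ = vertices, $r,s$ = range, source, $\Lambda^n=d^{-1}(n)$, $v\Lambda^n=\{\lambda\in\Lambda^n:r(\lambda)=v\}$, $s(\lambda)\Lambda=\{\nu:r(\nu)=s(\lambda)\}$; row-finite: each $v\Lambda^n$ finite; no sources: each $v\Lambda^n$ nonempty. Infinite paths are degree-preserving functors $x:\Omega_k\to\Lambda$, where $\Omega_k$ has objects $\mathbb N^k$, morphisms $(p,q)$, $p\le q$, $d(p,q)=q-p$; $\Lambda^\infty$ is their set, $r(x)=x(0,0)$. Shift: $\sigma^m(x)(p,q)=x(p+m,q+m)$. Prefixing: for $r(x)=s(\lambda)$, $\sigma_\lambda(x)$ is the unique $y$ with $y(0,d(\lambda))=\lambda$, $\sigma^{d(\lambda)}(y)=x$. A representation of $C^*(\Lambda)$ is a family of partial isometries $\{t_\lambda\}$ satisfying (CK1)–(CK4): $\{t_v\}$ mutually orthogonal projections; $t_\lambda t_\eta=t_{\lambda\eta}$ when $s(\lambda)=r(\eta)$; $t_\lambda^*t_\lambda=t_{s(\lambda)}$; $t_v=\sum_{\lambda\in v\Lambda^n}t_\lambda t_\lambda^*$. It is permutative if there is an orthonormal basis $\{e_i\}_{i\in I}$ and, for each $\lambda$, sets $J_\lambda,K_\lambda\subseteq I$ and a bijection $\tilde\sigma_\lambda:J_\lambda\to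 K_\lambda$ with: (a) $\bigcup_{\lambda\in\Lambda^n}J_\lambda=\bigcup_{\lambda\in\Lambda^n}K_\lambda=I$ for each $n$; (b) $K_\nu\subseteq J_\lambda$ and $\tilde\sigma_\lambda\circ\tilde\sigma_\nu=\tilde\sigma_{\lambda\nu}$ for $\nu\in s(\lambda)\Lambda$; (c) $t_\lambda e_i=e_{\tilde\sigma_\lambda(i)}$ for $i\in J_\lambda$, $0$ otherwise; (d) $t_\lambda^*e_{\tilde\sigma_\lambda(i)}=e_i$ for $i\in J_\lambda$, and $t_\lambda^*e_j=0$ for $j\in K_{\lambda'}$, $\lambda'\ne\lambda$, $d(\lambda')=d(\lambda)$. Then for each $n$ the $K_\lambda$, $\lambda\in\Lambda^n$, partition $I$; the encoding map $E:I\to\Lambda^\infty$ is given by $E(i)(0,n)=$ the unique $\lambda\in\Lambda^n$ with $i\in K_\lambda$; and the coding map $\tilde\sigma^n:I\to I$ sends $i\in K_\lambda$ ($\lambda\in\Lambda^n$) to the unique $i_n\in J_\lambda$ with $\tilde\sigma_\lambda(i_n)=i$. *)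

From HB Require Import structures.
From mathcomp Require Import all_boot all_order all_algebra.
From mathcomp Require Import all_classical all_reals all_analysis.
From mathcomp Require Import complex.
Set Implicit Arguments.
Unset Strict Implicit.
Unset Printing Implicit Defensive.
Import Order.TTheory GRing.Theory Num.Theory.
Import numFieldNormedType.Exports.
Local Open Scope classical_set_scope.
Local Open Scope ring_scope.
Local Open Scope complex_scope.

Definition nk (k : nat) := {ffun 'I_k -> nat}.
Definition nk0 {k : nat} : nk k := [ffun=> 0%N].
Definition nkadd {k : nat} (m n : nk k) : nk k := [ffun i => (m i + n i)%N].
Definition nksub {k : nat} (m n : nk k) : nk k := [ffun i => (m i - n i)%N].
Definition nkle {k : nat} (m n : nk k) : bool := [forall i, (m i <= n i)%N].

(* Composition is a total function, meaningful on composable pairs     *)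
(* (src a = rng b); kcomp a b is "a b" (first b, then a, as in paper). *)
Record kgraph (k : nat) := KGraph {
  kvert : countType;
  kmor : countType;
  krng : kmor -> kvert;
  ksrc : kmor -> kvert;
  kid : kvert -> kmor;
  kcomp : kmor -> kmor -> kmor;
  kdeg : kmor -> nk k;
  kid_src : forall v, ksrc (kid v) = v;
  kid_rng : forall v, krng (kid v) = v;
  kcomp_src : forall a b, ksrc a = krng b -> ksrc (kcomp a b) = ksrc b;
  kcomp_rng : forall a b, ksrc a = krng b -> krng (kcomp a b) = krng a;
  kid_l : forall a, kcomp (kid (krng a)) a = a;
  kid_r : forall a, kcomp a (kid (ksrc a)) = a;
  kcomp_assoc : forall a b c, ksrc a = krng b -> ksrc b = krng c ->
    kcomp (kcomp a b) c = kcomp a (kcomp b c);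
  kdeg_id : forall v, kdeg (kid v) = nk0;
  kdeg_comp : forall a b, ksrc a = krng b ->
    kdeg (kcomp a b) = nkadd (kdeg a) (kdeg b);
  kfactor : forall l (m n : nk k), kdeg l = nkadd m n ->
    exists! mn : kmor * kmor,
      [/\ ksrc mn.1 = krng mn.2, l = kcomp mn.1 mn.2,
          kdeg mn.1 = m & kdeg mn.2 = n]
}.
Arguments krng {k G} : rename.
Arguments ksrc {k G} : rename.
Arguments kid {k G} : rename.
Arguments kcomp {k G} : rename.
Arguments kdeg {k G} : rename.

Definition vLn {k} (G : kgraph k) (v : kvert G) (n : nk k) : set (kmor G) :=
  [set l | krng l = v /\ kdeg l = n].

Definition row_finite {k} (G : kgraph k) : Prop :=
  forall (v : kvert G) (n : nk k), finite_set (vLn v n).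

Definition no_sources {k} (G : kgraph k) : Prop :=
  forall (v : kvert G) (n : nk k), vLn v n !=set0.

(* Infinite paths: degree preserving functors x : Omega_k -> Lambda.   *)
(* A path is given by its values x p q on the morphisms (p,q), p <= q; *)
(* the values for p not <= q are irrelevant.                            *)
Definition is_inf_path {k} (G : kgraph k) (x : nk k -> nk k -> kmor G) : Prop :=
  [/\ (forall p q, nkle p q -> kdeg (x p q) = nksub q p),
      (forall p, x p p = kid (krng (x p p))) &
      (forall p q m, nkle p q -> nkle q m ->
         ksrc (x p q) = krng (x q m) /\ x p m = kcomp (x p q) (x q m))].

Definition path_eq {k} (G : kgraph k) (x y : nk k -> nk k -> kmor G) : Prop :=
  forall p q, nkle p q -> x p q = y p q.

Definition is_shift {k} (G : kgraph k) (m : nk k)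
    (x y : nk k -> nk k -> kmor G) : Prop :=
  forall p q, nkle p q -> y p q = x (nkadd p m) (nkadd q m).

Definition is_prefixing {k} (G : kgraph k) (l : kmor G)
    (x y : nk k -> nk k -> kmor G) : Prop :=
  [/\ is_inf_path y, y nk0 (kdeg l) = l & is_shift (kdeg l) y x].

Definition is_inner_product (R : realType) (V : completeNormedModType R[i])
    (ip : V -> V -> R[i]) : Prop :=
  [/\ (forall a x y z, ip (a *: x + y) z = a * ip x z + ip y z),
      (forall x y, ip y x = (ip x y)^*) &
      (forall x, ip x x = `|x| ^+ 2)].

Definition lin_span (R : realType) (V : completeNormedModType R[i])
    (I : Type) (e : I -> V) : set V :=
  [set v | exists (s : seq I) (c : I -> R[i]), v = \sum_(i <- s) c i *: e i].

Definition is_ONB (R : realType) (V : completeNormedModType R[i])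
    (ip : V -> V -> R[i]) (I : Type) (e : I -> V) : Prop :=
  (forall i, ip (e i) (e i) = 1) /\ (forall i j, i <> j -> ip (e i) (e j) = 0) /\
  closure (lin_span e) = setT.

Definition CK_family {k} (G : kgraph k) (R : realType)
    (V : completeNormedModType R[i]) (ip : V -> V -> R[i])
    (t : kmor G -> {linear V -> V}) (ts : kmor G -> V -> V) : Prop :=
  [/\ (forall l, continuous (t l)),
      (forall l x y, ip (t l x) y = ip x (ts l y)),
      (forall l x, t l (ts l (t l x)) = t l x) &
    [/\
      ((forall (v : kvert G) x, t (kid v) (t (kid v) x) = t (kid v) x /\
                   ts (kid v) x = t (kid v) x) /\
       (forall (v w : kvert G) x, v <> w -> t (kid v) (t (kid w) x) = 0)),
      (forall a b x, ksrc a = krng b -> t (kcomp a b) x = t a (t b x)),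
      (forall a x, ts a (t a x) = t (kid (ksrc a)) x) &
      (forall (v : kvert G) (n : nk k) x, t (kid v) x = \sum_(l \in vLn v n) t l (ts l x))]].

Definition bij_on (I : Type) (J K : set I) (sig : I -> I) : Prop :=
  [/\ (forall i, J i -> K (sig i)),
      (forall i j, J i -> J j -> sig i = sig j -> i = j) &
      (forall j, K j -> exists2 i, J i & sig i = j)].

Definition permutative {k} (G : kgraph k) (R : realType)
    (V : completeNormedModType R[i])
    (t : kmor G -> {linear V -> V}) (ts : kmor G -> V -> V)
    (I : Type) (e : I -> V) (J K : kmor G -> set I)
    (sig : kmor G -> I -> I) : Prop :=
  [/\ (forall l, bij_on (J l) (K l) (sig l)),
      (forall n, \bigcup_(l in [set l | kdeg l = n]) J l = setT /\
                 \bigcup_(l in [set l | kdeg l = n]) K l = setT),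
      (forall l nu, ksrc l = krng nu ->
         [/\ K nu `<=` J l, J (kcomp l nu) = J nu &
             forall i, J nu i -> sig l (sig nu i) = sig (kcomp l nu) i]),
      (forall l i, (J l i -> t l (e i) = e (sig l i)) /\
                   (~ J l i -> t l (e i) = 0)) &
      ((forall l i, J l i -> ts l (e (sig l i)) = e i) /\
       (forall l l' j, l' <> l -> kdeg l' = kdeg l -> K l' j -> ts l (e j) = 0))].

Definition encoding_map {k} (G : kgraph k) (I : Type) (K : kmor G -> set I)
    (E : I -> nk k -> nk k -> kmor G) : Prop :=
  forall i, is_inf_path (E i) /\ (forall l, K l i -> E i nk0 (kdeg l) = l).

Definition coding_maps {k} (G : kgraph k) (I : Type) (J K : kmor G -> set I)
    (sig : kmor G -> I -> I) (sign : nk k -> I -> I) : Prop :=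
  forall n i l, kdeg l = n -> K l i -> J l (sign n i) /\ sig l (sign n i) = i.

From Pilot Require
Import Defs.
From HB Require Import structures.
From mathcomp Require Import all_boot all_order all_algebra.
From mathcomp Require Import all_classical all_reals all_analysis.
From mathcomp Require Import complex.
Import Defs.
Import Order.TTheory GRing.Theory Num.Theory.
Import numFieldNormedType.Exports.
Local Open Scope classical_set_scope.
Local Open Scope ring_scope.
Local Open Scope complex_scope.

(* If i is in J_l and
   j = sigma~_l(i), then by (b) j lies in K_{l E(i)(0,q)} for every q, so
   E(j)(0, q + d(l)) = l E(i)(0,q); unique factorization then gives
   sigma^{d(l)}(E j) = E i, i.e. E j = sigma_l(E i).  Taking l = E(i)(0,n) and
   sigma~^n(i) in place of i gives sigma^n(E i) = E(sigma~^n(i)).  Injectivity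
   of E is needed only to restate these identities with E^{-1}. *)

Lemma nkaddC {k} (m n : nk k) : nkadd m n = nkadd n m.
Proof. by apply/ffunP => x; rewrite !ffunE addnC. Qed.

Lemma nkaddI {k} (m n1 n2 : nk k) : nkadd m n1 = nkadd m n2 -> n1 = n2.
Proof.
move=> eq_mn; apply/ffunP => x.
by move/ffunP/(_ x): eq_mn; rewrite !ffunE => /addnI.
Qed.

Lemma nksub0 {k} (m : nk k) : nksub m nk0 = m.
Proof. by apply/ffunP => x; rewrite !ffunE subn0. Qed.

Lemma nkle0 {k} (m : nk k) : nkle nk0 m.
Proof. by apply/forallP => x; rewrite ffunE. Qed.

Lemma nkle_add2r {k} (p q n : nk k) : nkle p q -> nkle (nkadd p n) (nkadd q n).
Proof. by move/forallP => le_pq; apply/forallP => x; rewrite !ffunE leq_add2r. Qed.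

Section KGraph.

Context {k : nat} {G : kgraph k}.

Lemma kfactor_uniq {a b a' b' : kmor G} :
  ksrc a = krng b -> ksrc a' = krng b' ->
  kcomp a b = kcomp a' b' -> kdeg a = kdeg a' -> a = a' /\ b = b'.
Proof.
move=> ab a'b' eq_ab deg_a.
have deg_b : kdeg b = kdeg b'.
  by apply: (@nkaddI _ (kdeg a)); rewrite -kdeg_comp // eq_ab kdeg_comp // deg_a.
have [mn [_ uniq_mn]] := kfactor (kdeg_comp ab).
have := uniq_mn (a', b') (And4 a'b' eq_ab (esym deg_a) (esym deg_b)).
by rewrite (uniq_mn (a, b) (And4 ab erefl erefl erefl)) => -[-> ->].
Qed.

Lemma is_shift_of_prefix (l : kmor G) (x y : nk k -> nk k -> kmor G) :
  is_inf_path x -> is_inf_path y ->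
  (forall q, ksrc l = krng (x nk0 q) /\
             y nk0 (nkadd q (kdeg l)) = kcomp l (x nk0 q)) ->
  is_shift (kdeg l) y x.
Proof.
move=> [deg_x _ comp_x] [deg_y _ comp_y] prefix p q le_pq.
have [l_x0q y0q] := prefix q.
have [x0p_xpq x0q] := comp_x nk0 p q (nkle0 p) le_pq.
have [y0p_ypq y0q'] :=
  comp_y nk0 (nkadd p (kdeg l)) (nkadd q (kdeg l))
    (nkle0 _) (nkle_add2r _ _ _ le_pq).
have l_x0p : ksrc l = krng (x nk0 p) by rewrite l_x0q x0q kcomp_rng.
have lx0p_xpq : ksrc (kcomp l (x nk0 p)) = krng (x p q) by rewrite kcomp_src.
set dl := kdeg l; set y0p := y nk0 (nkadd p dl); set ypq := y _ (nkadd q dl).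
have comp_eq : kcomp y0p ypq = kcomp (kcomp l (x nk0 p)) (x p q).
  by rewrite -y0q' y0q x0q kcomp_assoc.
have deg_eq : kdeg y0p = kdeg (kcomp l (x nk0 p)).
  by rewrite kdeg_comp // deg_x ?deg_y ?nkle0 // !nksub0 nkaddC.
by have [_ <-] := kfactor_uniq y0p_ypq lx0p_xpq comp_eq deg_eq.
Qed.

End KGraph.

Lemma ip_eq1_neq0 {R : realType} {V : completeNormedModType R[i]}
    {ip : V -> V -> R[i]} {x : V} :
  is_inner_product ip -> ip x x = 1 -> x <> 0.
Proof.
move=> [_ _ ip_norm] ipx1 x0; move: ipx1.
by rewrite x0 ip_norm normr0 expr0n /= => /eqP; rewrite eq_sym oner_eq0.
Qed.

Section Permutative.

Context {k : nat} {G : kgraph k} {R : realType} {V : completeNormedModType R[i]}.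
Context {ip : V -> V -> R[i]} {t : kmor G -> {linear V -> V}} {ts : kmor G -> V -> V}.
Context {I : Type} {e : I -> V} {J K : kmor G -> set I} {sig : kmor G -> I -> I}.
Context {E : I -> nk k -> nk k -> kmor G}.

Hypothesis CK : CK_family ip t ts.
Hypothesis perm : permutative t ts e J K sig.
Hypothesis enc : encoding_map K E.
Hypothesis e_neq0 : forall j, e j <> 0.

Lemma K_encoding i n : K (E i nk0 n) i /\ kdeg (E i nk0 n) = n.
Proof.
have [_ cover _ _ _] := perm; have [_ coverK] := cover n.
have : (\bigcup_(l in [set l | kdeg l = n]) K l) i by rewrite coverK.
by case=> l /= <- Kli; rewrite (enc i).2.
Qed.

Lemma K_fixed_by_rng {nu i} : K nu i -> t (kid (krng nu)) (e i) = e i.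
Proof.
have [_ _ _ [_ CK2 _ _]] := CK; have [bij _ _ tJ _] := perm.
move=> Knu; have [_ _ onto] := bij nu; have [i' J'i <-] := onto i Knu.
by rewrite -(tJ nu i').1 // -CK2 ?kid_src // kid_l.
Qed.

(* (CK1) makes the projections t_v orthogonal, and t_l = t_l t_{s(l)}. *)
Lemma J_K_composable {l nu i} :
  J l i -> K nu i -> ksrc l = krng nu.
Proof.
have [_ _ _ [[_ CK1] CK2 _ _]] := CK; have [_ _ _ tJ _] := perm.
move=> Jli Knu; case: (eqVneq (ksrc l) (krng nu)) => // src_rng.
have kill : t (kid (ksrc l)) (e i) = 0.
  by rewrite -(K_fixed_by_rng Knu); apply: CK1; apply/eqP.
case: (e_neq0 (sig l i)).
by rewrite -(tJ l i).1 // -(kid_r l) CK2 ?kid_rng // kill linear0.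
Qed.

Lemma K_kcomp {l nu i} : ksrc l = krng nu -> K nu i -> K (kcomp l nu) (sig l i).
Proof.
have [bij _ compat _ _] := perm.
move=> l_nu Knu; have [_ _ onto] := bij nu; have [i' J'i <-] := onto i Knu.
have [_ J_lnu sig_lnu] := compat l nu l_nu.
have [into _ _] := bij (kcomp l nu).
by rewrite sig_lnu //; apply: into; rewrite J_lnu.
Qed.

Lemma encoding_shift_sig l i :
  J l i -> is_shift (kdeg l) (E (sig l i)) (E i).
Proof.
move=> Jli; apply: is_shift_of_prefix; [exact: (enc _).1 | exact: (enc _).1 |].
move=> q; have [Ki deg_q] := K_encoding i q.
have l_nu := J_K_composable Jli Ki.
have deg_lnu : kdeg (kcomp l (E i nk0 q)) = nkadd q (kdeg l).
  by rewrite kdeg_comp // deg_q nkaddC.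
by split=> //; rewrite -deg_lnu (enc _).2 //; apply: K_kcomp.
Qed.

End Permutative.

Theorem corollary4p4 (k : nat) (G : kgraph k) (R : realType)
    (V : completeNormedModType R[i]) (ip : V -> V -> R[i])
    (t : kmor G -> {linear V -> V}) (ts : kmor G -> V -> V)
    (I : Type) (e : I -> V) (J K : kmor G -> set I)
    (sig : kmor G -> I -> I) (sign : nk k -> I -> I)
    (E : I -> nk k -> nk k -> kmor G) :
  row_finite G -> no_sources G ->
  is_inner_product ip -> is_ONB ip e ->
  CK_family ip t ts ->
  permutative t ts e J K sig ->
  coding_maps J K sig sign ->
  encoding_map K E ->
  (forall i j, path_eq (E i) (E j) -> i = j) ->
  (forall l i, J l i -> is_prefixing l (E i) (E (sig l i))) /\
  (forall n i, is_shift n (E i) (E (sign n i))).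
Proof.
move=> _ _ ipV [e_unit _] CK perm cod enc _.
have e_neq0 j : e j <> 0 := ip_eq1_neq0 ipV (e_unit j).
have shift := encoding_shift_sig CK perm enc e_neq0.
split=> [l i Jli | n i].
  have [bij _ _ _ _] := perm; have [into _ _] := bij l.
  split; [exact: (enc _).1 | | exact: shift].
  by apply: (enc _).2; apply: into.
have [Ki deg_n] := K_encoding perm enc i n.
have [Jn sig_n] := cod n i _ deg_n Ki.
by have := shift _ _ Jn; rewrite sig_n deg_n.
Qed.
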